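(* Let $G$ be a graph with no induced subgraph isomorphic to $C_4$. Then a clique of $G$ is strong if and only if it is simplicial.
   Context: A clique is strong if it intersects every maximal independent set. A clique $C$ of $G$ is simplicial if there is a vertex $v\in V(G)$ with $C=N[v]$, the closed neighborhood of $v$. *)

From mathcomp Require Import all_boot.
Set Implicit Arguments. Unset Strict Implicit. Unset Printing Implicit Defensive.

Section Graphs.
Variable T : finType.
Variable e : rel T.

Definition simple_graph : Prop := irreflexive e /\ symmetric e.

Definition is_clique (C : {set T}) : bool :=
  [forall x in C, forall y in C, (x != y) ==> e x y].

Definition is_independent (S : {set T}) : bool :=
  [forall x in S, forall y in S, ~~ e x y].

Definition is_max_independent (S : {set T}) : bool :=
  maxset is_independent S.

Definition strong_clique (C : {set T}) : Prop :=
  is_clique C /\ forall I : {set T}, is_max_independent I -> exists2 x, x \in C & x \in I.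

Definition closed_nbhd (v : T) : {set T} := [set u | (u == v) || e v u].

Definition simplicial_clique (C : {set T}) : Prop :=
  is_clique C /\ exists v : T, C = closed_nbhd v.

Definition C4_free : Prop :=
  forall a b c d : T, e a b -> e b c -> e c d -> e d a ->
    a != c -> b != d -> e a c || e b d.
End Graphs.

From mathcomp Require Import all_boot.

Set Implicit Arguments.
Unset Strict Implicit.
Unset Printing Implicit Defensive.

(* A maximal independent set dominates the graph, so it meets every closed
   neighbourhood: simplicial cliques are strong.  Conversely, if a clique C is
   no closed neighbourhood, every vertex of C has a neighbour outside C.  Pick
   an independent set S outside C dominating as many vertices of C as
   possible.  If some c in C were undominated, trade the neighbours in S of a
   neighbour u of c outside C for u itself: by C4-freeness u still dominates
   every vertex of C they dominated, and it also dominates c.  So S dominates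
   all of C, and a maximal independent set containing S cannot meet C. *)

Section StrongSimplicial.
Variable T : finType.
Variable e : rel T.
Hypothesis e_irr : irreflexive e.
Hypothesis e_sym : symmetric e.

Lemma cliqueP (C : {set T}) :
  reflect {in C &, forall x y, x != y -> e x y} (is_clique e C).
Proof.
apply: (iffP forall_inP) => [cl x y xC yC | cl x xC].
  by move/forall_inP/(_ y yC)/implyP: (cl x xC).
by apply/forall_inP => y yC; apply/implyP; apply: cl.
Qed.

Lemma independentP (S : {set T}) :
  reflect {in S &, forall x y, ~~ e x y} (is_independent e S).
Proof.
apply: (iffP forall_inP) => [ind x y xS yS | ind x xS].
  by move/forall_inP/(_ y yS): (ind x xS).
by apply/forall_inP => y yS; apply: ind.
Qed.

Lemma independent_setU1 (S : {set T}) v :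
  is_independent e S -> (forall s, s \in S -> ~~ e v s) ->
  is_independent e (v |: S).
Proof.
move=> /independentP indS nv; apply/independentP => x y.
rewrite !inE => /predU1P[-> | xS] /predU1P[-> | yS].
- by rewrite e_irr.
- exact: nv.
- by rewrite e_sym nv.
- exact: indS.
Qed.

Lemma max_independent_dominates (I : {set T}) v :
  is_max_independent e I -> v \notin I -> exists2 u, u \in I & e v u.
Proof.
move=> /maxsetP[indI maxI] vI; apply/exists_inP/negP => /exists_inP nodom.
have indJ : is_independent e (v |: I).
  by apply: independent_setU1 => // s sI; apply/negP => evs; apply: nodom; exists s.
by move: vI; rewrite -(maxI _ indJ (subsetUr _ _)) setU11.
Qed.

Lemma closed_nbhd_meets_max_independent (I : {set T}) v :
  is_max_independent e I -> exists2 x, x \in closed_nbhd e v & x \in I.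
Proof.
move=> maxI; have [vI | vI] := boolP (v \in I).
  by exists v; rewrite // inE eqxx.
have [u uI evu] := max_independent_dominates maxI vI.
by exists u; rewrite // inE evu orbT.
Qed.

Lemma clique_sub_closed_nbhd (C : {set T}) c :
  is_clique e C -> c \in C -> C \subset closed_nbhd e c.
Proof.
move=> /cliqueP cl cC; apply/subsetP => x xC; rewrite inE.
by have [// | /= xc] := eqVneq x c; apply: cl; rewrite // eq_sym.
Qed.

Lemma nonsimplicial_clique_neighbour_out (C : {set T}) :
  is_clique e C -> (forall v, C != closed_nbhd e v) ->
  {in C, forall c, exists2 u, u \notin C & e c u}.
Proof.
move=> cl notN c cC.
have : ~~ (closed_nbhd e c \subset C).
  by move: (notN c); rewrite eqEsubset clique_sub_closed_nbhd.
case/subsetPn => u; rewrite inE => /predU1P[-> | ecu] uC; first by rewrite cC in uC.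
by exists u.
Qed.

Definition dominated (C S : {set T}) : {set T} :=
  [set c in C | [exists s in S, e c s]].

Hypothesis e_C4_free : C4_free e.

Section Exchange.
Variables (C S : {set T}) (c u : T).
Hypotheses (clC : is_clique e C) (indS : is_independent e S) (SC : S \subset ~: C).
Hypotheses (cC : c \in C) (undom : {in S, forall s, ~~ e c s}) (uC : u \notin C) (ecu : e c u).

Let S' := u |: [set s in S | ~~ e u s].

Lemma exchange_independent_out : is_independent e S' && (S' \subset ~: C).
Proof.
apply/andP; split.
  apply: independent_setU1 => [|s]; last by rewrite inE => /andP[].
  by apply/independentP => x y; rewrite !inE => /andP[xS _] /andP[yS _];
     apply: (independentP _ indS).
apply/subsetP => x; rewrite !inE => /predU1P[-> // | /andP[xS _]].
by move/subsetP/(_ x xS): SC; rewrite inE.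
Qed.

Lemma exchange_dominated_proper : dominated C S \proper dominated C S'.
Proof.
apply/properP; split; last first.
  exists c; last by rewrite inE cC; apply/exists_inPn.
  by rewrite inE cC; apply/exists_inP; exists u; rewrite // !inE eqxx.
apply/subsetP => x; rewrite !inE => /andP[xC /exists_inP[s sS exs]].
rewrite xC; apply/exists_inP.
have [eus | neus] := boolP (e u s); last by exists s; rewrite // !inE sS neus orbT.
exists u; first by rewrite !inE eqxx.
have sC : s \notin C by move/subsetP/(_ s sS): SC; rewrite inE.
have cx : c != x by apply: contraTneq exs => <-; apply: undom.
have ux : u != x by apply: contraTneq xC => <-.
have cs : c != s by apply: contraTneq cC => ->.
have ecx : e c x by apply: (cliqueP _ clC).
(* u - c - x - s - u is a 4-cycle, and its chord c - s is missing *)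
have euc : e u c by rewrite e_sym.
have esu : e s u by rewrite e_sym.
have := e_C4_free euc ecx exs esu ux cs.
by rewrite (negbTE (undom sS)) orbF e_sym.
Qed.

End Exchange.

Lemma dominating_independent_out (C : {set T}) :
  is_clique e C -> {in C, forall c, exists2 u, u \notin C & e c u} ->
  exists2 S, is_independent e S & dominated C S = C.
Proof.
move=> clC out.
pose P (S : {set T}) := is_independent e S && (S \subset ~: C).
have P0 : P set0 by rewrite /P sub0set andbT; apply/independentP => x; rewrite inE.
case: (arg_maxnP (fun S => #|dominated C S|) P0) => S /andP[indS SC] maxS.
exists S => //; apply/setP => c; rewrite inE andb_idr // => cC.
apply: contraT => /exists_inPn undom.
have [u uC ecu] := out c cC.
have := maxS _ (exchange_independent_out indS SC uC).
by rewrite /= leqNgt (proper_card (exchange_dominated_proper clC SC cC undom uC ecu)).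
Qed.

Lemma strong_clique_closed_nbhd (C : {set T}) :
  is_clique e C ->
  (forall I, is_max_independent e I -> exists2 x, x \in C & x \in I) ->
  exists v, C = closed_nbhd e v.
Proof.
move=> clC strong.
have [/existsP[v /eqP->] | /existsPn notN] := boolP [exists v, C == closed_nbhd e v].
  by exists v.
have [S indS domS] :=
  dominating_independent_out clC (nonsimplicial_clique_neighbour_out clC notN).
have [I maxI SI] := maxset_exists indS.
have [x xC xI] := strong I maxI.
move: xC; rewrite -domS inE => /andP[_ /exists_inP[s sS exs]].
by move/independentP/(_ x s xI (subsetP SI s sS)): (maxsetp maxI); rewrite exs.
Qed.

End StrongSimplicial.

Theorem mainTheorem9 (T : finType) (e : rel T) :
  simple_graph e -> C4_free e ->
  forall C : {set T}, is_clique e C ->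
    (strong_clique e C <-> simplicial_clique e C).
Proof.
move=> [e_irr e_sym] e_C4_free C clC; split.
  by case=> _ strong; split => //; apply: strong_clique_closed_nbhd.
case=> _ [v Cv]; split => // I maxI; rewrite Cv.
exact: closed_nbhd_meets_max_independent.
Qed.
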